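(* Let $n\ge1$ and define $\phi(x_j)=I_{n+1}+E_{j+1,j}$ and $\phi(y_j)=I_{n+1}+E_{j,j+1}$ in $\mathrm{GL}_{n+1}(\mathbb{F}_2)$ for $1\le j\le n$. Then the map $\phi$ on $\{x_1,\dots,x_n,y_1,\dots,y_n\}$ extends to a group homomorphism $\phi\colon\langle A_{2,n}\rangle\to\mathrm{GL}_{n+1}(\mathbb{F}_2)$.
   Context: $E_{i,j}$ is the matrix with $1$ in row $i$, column $j$ and $0$ elsewhere. The group $\langle A_{2,n}\rangle$ has generators $X=\{x_1,\dots,x_n,y_1,\dots,y_n\}$ and defining relations: $z^2=e$ for all $z\in X$; $(x_ix_{i+1})^4=(y_iy_{i+1})^4=e$ for $1\le i\le n-1$; $(x_iy_i)^3=e$ for $1\le i\le n$; $(zt)^2=e$ for every other pair of distinct $z,t\in X$; $(x_ix_{i+1}y_i)^3=(x_ix_{i+1}y_{i+1})^3=(x_iy_iy_{i+1})^3=(x_{i+1}y_iy_{i+1})^3=e$ for $1\le i\le n-1$; and $(x_ix_{i+1}x_{i+2})^4=(y_iy_{i+1}y_{i+2})^4=e$ for $1\le i\le n-2$. *)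

From HB Require Import structures.
From mathcomp Require Import all_boot all_order all_algebra all_fingroup.
Set Implicit Arguments. Unset Strict Implicit. Unset Printing Implicit Defensive.
Import GRing.Theory.
Local Open Scope ring_scope.

(* Generators of <A_{2,n}>, 0-based indices: (false, i) = x_{i+1}, (true, i) = y_{i+1}. *)
Definition gen (n : nat) := (bool * 'I_n)%type.
Definition gx {n} (i : 'I_n) : gen n := (false, i).
Definition gy {n} (i : 'I_n) : gen n := (true, i).

Definition wpow {T} (m : nat) (s : seq T) : seq T := flatten (nseq m s).

(* pairs {x_i,x_{i+1}}, {y_i,y_{i+1}}, {x_i,y_i} (which have their own relation) *)
Definition special_pair {n} (z t : gen n) : bool :=
  ((z.1 == t.1) && ((val z.2 == (val t.2).+1)%N || (val t.2 == (val z.2).+1)%N))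
  || ((z.1 != t.1) && (z.2 == t.2)).

Definition is_relator {n} (w : seq (gen n)) : Prop :=
  (exists z : gen n, w = [:: z; z])
  \/ (exists i j : 'I_n, val j = (val i).+1 /\
        (w = wpow 4 [:: gx i; gx j] \/ w = wpow 4 [:: gy i; gy j]
         \/ w = wpow 3 [:: gx i; gx j; gy i] \/ w = wpow 3 [:: gx i; gx j; gy j]
         \/ w = wpow 3 [:: gx i; gy i; gy j] \/ w = wpow 3 [:: gx j; gy i; gy j]))
  \/ (exists i : 'I_n, w = wpow 3 [:: gx i; gy i])
  \/ (exists z t : gen n, z != t /\ ~~ special_pair z t /\ w = wpow 2 [:: z; t])
  \/ (exists i j k : 'I_n, val j = (val i).+1 /\ val k = (val j).+1 /\
        (w = wpow 4 [:: gx i; gx j; gx k] \/ w = wpow 4 [:: gy i; gy j; gy k])).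

(* Equality in the presented group: the congruence on words generated by
   the relators (since every generator is an involution, words in X without
   formal inverses represent every element). *)
Inductive word_eq {n} : seq (gen n) -> seq (gen n) -> Prop :=
| weq_refl w : word_eq w w
| weq_sym u v : word_eq u v -> word_eq v u
| weq_trans u v w : word_eq u v -> word_eq v w -> word_eq u w
| weq_rel u r v : is_relator r -> word_eq (u ++ r ++ v) (u ++ v).

(* phi on generators, in M_{n+1}(F_2); 0-based: x_i -> I + E_{i+1,i}, y_i -> I + E_{i,i+1} *)
Definition phi_gen {n} (z : gen n) : 'M['F_2]_(n.+1) :=
  let i : 'I_n.+1 := inord (val z.2) in
  let j : 'I_n.+1 := inord (val z.2).+1 in
  if z.1 then 1%:M + delta_mx i j else 1%:M + delta_mx j i.

Definition phi_word {n} (w : seq (gen n)) : 'M['F_2]_(n.+1) :=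
  \prod_(z <- w) phi_gen z.

(* Every relator of <A_{2,n}> except the commutation relators involves only
   generators x_j, y_j with j in a window of at most three consecutive
   indices, so under phi its image is the identity outside a diagonal block of
   size at most 4, on which the generators act by the same elementary
   matrices I + E_{a+1,a}, I + E_{a,a+1} of GL_4(F_2) whatever the position
   of the block.  The relators are therefore verified once and for all by computing
   products of at most 12 elementary 4x4 matrices over F_2.  The remaining
   relators (zt)^2 ask that I + E_{ab} and I + E_{cd} commute, which holds
   because E_{ab} E_{cd} = E_{cd} E_{ab} = 0 when b <> c and d <> a. *)
From mathcomp Require Import all_boot all_algebra zify.
Local Open Scope ring_scope.
Import GRing.Theory.
Set Implicit Arguments. Unset Strict Implicit.

Lemma natr_addb (a b : bool) : ((a (+) b)%:R : 'F_2) = a%:R + b%:R.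
Proof. by case: a; case: b => //=; apply/val_inj. Qed.

Lemma natr_andb (a b : bool) : ((a && b)%:R : 'F_2) = a%:R * b%:R.
Proof. by rewrite -natrM mulnb. Qed.

Lemma natr_foldr_addb (bs : seq bool) :
  ((foldr addb false bs)%:R : 'F_2) = \sum_(b <- bs) b%:R.
Proof. by elim: bs => [|b bs IH]; rewrite ?big_nil // big_cons -IH -natr_addb. Qed.

Lemma commute_elementary (R : pzRingType) m (a b c d : 'I_m) :
  b != c -> d != a ->
  (1%:M + delta_mx a b) *m (1%:M + delta_mx c d)
  = (1%:M + delta_mx c d) *m (1%:M + delta_mx a b) :> 'M[R]_m.
Proof.
move=> bc da; rewrite !mulmxDl !mulmxDr !mul1mx !mulmx1.
by rewrite !mul_delta_mx_0 // !addr0 addrAC.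
Qed.

Lemma map_wpow (T U : Type) (f : T -> U) m s : map f (wpow m s) = wpow m (map f s).
Proof. by rewrite /wpow map_flatten map_nseq. Qed.

(* Square 0/1 matrices as lists of rows: unlike ['M_w] they compute, so that
   identities between explicit products are closed by evaluation. *)
Definition bmx_entry (A : seq (seq bool)) r c := nth false (nth [::] A r) c.
Definition bmx_of w (f : nat -> nat -> bool) := mkseq (fun r => mkseq (f r) w) w.
Definition bmx_mul w A B :=
  bmx_of w (fun r c => foldr addb false
                         [seq bmx_entry A r k && bmx_entry B k c | k <- iota 0 w]).
Definition bmx_id w := bmx_of w (fun r c => r == c).
Definition bmx_elem w p q := bmx_of w (fun r c => (r == c) (+) ((r == p) && (c == q))).

Lemma bmx_entry_of w f r c :
  (r < w)%N -> (c < w)%N -> bmx_entry (bmx_of w f) r c = f r c.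
Proof. by move=> hr hc; rewrite /bmx_entry !nth_mkseq. Qed.

Definition in_window i w r := (i <= r < i + w)%N.

Definition embed_entry i w A (r c : nat) : 'F_2 :=
  (if in_window i w r && in_window i w c then bmx_entry A (r - i) (c - i)
   else r == c)%:R.
Definition bmx_embed n i w A : 'M['F_2]_n.+1 := \matrix_(r, c) embed_entry i w A r c.

Lemma embed_entry_off i w A r c :
  in_window i w r != in_window i w c -> embed_entry i w A r c = 0.
Proof.
move=> h; have /negbTE rc : r != c by apply: contra h => /eqP->.
by rewrite /embed_entry; move: h; case: in_window; case: in_window; rewrite ?rc.
Qed.

Lemma big_ord_window (R : nmodType) m i w (F : nat -> R) : (i + w <= m)%N ->
  (forall k, ~~ in_window i w k -> F k = 0) ->
  \sum_(k < m) F k = \sum_(a < w) F (i + a)%N.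
Proof.
move=> hw F0; rewrite -(big_mkord xpredT) (@big_cat_nat _ _ _ i) //=; last by lia.
rewrite (@big_cat_nat _ _ _ (i + w) i) //= ?leq_addr //.
rewrite [X in X + _]big1_seq ?add0r => [|k]; last first.
  by rewrite mem_index_iota => /andP[_ hk]; apply: F0; rewrite /in_window; lia.
rewrite [X in _ + X]big1_seq ?addr0 => [|k]; last first.
  by rewrite mem_index_iota => /andP[_ hk]; apply: F0; rewrite /in_window; lia.
rewrite -{1}(add0n i) big_addn addKn big_mkord.
by apply: eq_bigr => a _; rewrite addnC.
Qed.

Lemma bmx_embed_mul n i w A B : (i + w <= n.+1)%N ->
  bmx_embed n i w A * bmx_embed n i w B = bmx_embed n i w (bmx_mul w A B).
Proof.
move=> hw; rewrite -mulmxE; apply/matrixP => r c; rewrite !mxE.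
under eq_bigr do rewrite !mxE.
have [hr|hr] := boolP (in_window i w r); last first.
  rewrite (bigD1 r) //= big1 ?addr0 => [|k kr]; last first.
    have /negbTE rk : (r : nat) != k by rewrite eq_sym.
    by rewrite /embed_entry (negbTE hr) rk mul0r.
  by rewrite /embed_entry (negbTE hr) eqxx mul1r.
have in_a a : (a < w)%N -> in_window i w (i + a) by rewrite /in_window; lia.
rewrite (big_ord_window (F := fun k => embed_entry i w A r k * embed_entry i w B k c) hw)
  => [|k hk]; last by rewrite embed_entry_off ?mul0r // hr.
have [hc|hc] := boolP (in_window i w c); last first.
  rewrite embed_entry_off ?hr // big1 // => a _.
  by rewrite [embed_entry _ _ B _ _]embed_entry_off ?mulr0 // in_a ?hc.
have [lt_ri lt_ci] : (r - i < w)%N /\ (c - i < w)%N by move: hr hc; rewrite /in_window; lia.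
rewrite -(big_mkord xpredT (fun a => embed_entry i w A r (i + a) * embed_entry i w B (i + a) c)).
rewrite /embed_entry hr hc bmx_entry_of // natr_foldr_addb big_map /index_iota subn0.
apply: eq_big_seq => a; rewrite mem_iota => /andP[_ ha].
by rewrite in_a //= addKn natr_andb.
Qed.

Lemma bmx_embed_id n i w : bmx_embed n i w (bmx_id w) = 1.
Proof.
apply/matrixP => r c; rewrite !mxE /embed_entry; case: ifP => [/andP[hr hc]|_] //.
rewrite bmx_entry_of; try by move: hr hc; rewrite /in_window; lia.
by rewrite -val_eqE /=; congr (_ %:R); apply/eqP/eqP; move: hr hc; rewrite /in_window; lia.
Qed.

Definition bmx_letter w (l : bool * nat) :=
  let: (b, a) := l in if b then bmx_elem w a a.+1 else bmx_elem w a.+1 a.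

Definition bmx_word w (ls : seq (bool * nat)) :=
  foldr (fun l => bmx_mul w (bmx_letter w l)) (bmx_id w) ls.

Section Phi.

Variable n : nat.

Definition gen_row (z : gen n) : nat := if z.1 then val z.2 else (val z.2).+1.
Definition gen_col (z : gen n) : nat := if z.1 then (val z.2).+1 else val z.2.

Lemma phi_genE (z : gen n) :
  phi_gen z = 1%:M + delta_mx (inord (gen_row z)) (inord (gen_col z)).
Proof. by rewrite /phi_gen /gen_row /gen_col; case: z.1. Qed.

Lemma gen_row_col_bound (z : gen n) : (gen_row z <= n)%N /\ (gen_col z <= n)%N.
Proof. by rewrite /gen_row /gen_col; case: z => [[] k] /=; have := ltn_ord k; lia. Qed.

Lemma phi_gen_embed (z : gen n) i w a b :
  gen_row z = (i + a)%N -> gen_col z = (i + b)%N -> (a < w)%N -> (b < w)%N ->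
  phi_gen z = bmx_embed n i w (bmx_elem w a b).
Proof.
move=> hrow hcol ha hb; have [lrow lcol] := gen_row_col_bound z.
apply/matrixP => r c; rewrite phi_genE !mxE /embed_entry -natr_addb.
rewrite -!val_eqE /= !inordK // hrow hcol.
case: ifP => [/andP[hr hc]|out]; last first.
  case: andP => [[/eqP er /eqP ec]|_]; last by rewrite addbF.
  by move: out; rewrite /in_window er ec; lia.
move: hr hc; rewrite /in_window => hr hc.
rewrite bmx_entry_of; try lia.
by congr (_%:R); congr addb; [|congr andb]; apply/eqP/eqP; lia.
Qed.

Lemma phi_gen_letter (z : gen n) i w a :
  val z.2 = (i + a)%N -> (a.+1 < w)%N -> phi_gen z = bmx_embed n i w (bmx_letter w (z.1, a)).
Proof.
move=> hz ha; rewrite /bmx_letter.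
by case: ifP => hb; apply: phi_gen_embed; rewrite /gen_row /gen_col ?hb ?hz ?addnS //; lia.
Qed.

Lemma phi_word_nil : phi_word ([::] : seq (gen n)) = 1.
Proof. by rewrite /phi_word big_nil. Qed.

Lemma phi_word_cons (z : gen n) s : phi_word (z :: s) = phi_gen z * phi_word s.
Proof. by rewrite /phi_word big_cons. Qed.

Lemma phi_word_cat (u v : seq (gen n)) : phi_word (u ++ v) = phi_word u * phi_word v.
Proof. by rewrite /phi_word big_cat. Qed.

Lemma phi_word_window i w (s : seq (gen n)) (ls : seq (bool * nat)) :
  (i + w <= n.+1)%N -> all (fun l => l.2.+1 < w)%N ls ->
  [seq (z.1, val z.2) | z <- s] = [seq (l.1, i + l.2)%N | l <- ls] ->
  phi_word s = bmx_embed n i w (bmx_word w ls).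
Proof.
move=> hw; elim: s ls => [|z s IH] [|[b a] ls] //=.
  by rewrite phi_word_nil bmx_embed_id.
move=> /andP[ha hls] [hb hz hs].
by rewrite phi_word_cons (IH _ hls hs) (phi_gen_letter hz ha) bmx_embed_mul // hb.
Qed.

Lemma phi_word_window_id i w (s : seq (gen n)) (ls : seq (bool * nat)) :
  (i + w <= n.+1)%N -> all (fun l => l.2.+1 < w)%N ls ->
  [seq (z.1, val z.2) | z <- s] = [seq (l.1, i + l.2)%N | l <- ls] ->
  bmx_word w ls = bmx_id w -> phi_word s = 1.
Proof. by move=> hw hls hs hid; rewrite (phi_word_window hw hls hs) hid bmx_embed_id. Qed.

Lemma phi_gen_involutive (z : gen n) : phi_gen z * phi_gen z = 1.
Proof.
have hw : (z.2 + 2 <= n.+1)%N by have := ltn_ord z.2; lia.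
have <- : phi_word [:: z; z] = phi_gen z * phi_gen z.
  by rewrite !phi_word_cons phi_word_nil mulr1.
apply: (@phi_word_window_id _ 2 _ [:: (z.1, 0); (z.1, 0)]%N hw) => //.
  by rewrite /= addn0.
by case: z.1.
Qed.

Lemma phi_gen_commute (z t : gen n) : ~~ special_pair z t ->
  phi_gen z * phi_gen t = phi_gen t * phi_gen z.
Proof.
have inord_neq (a b : nat) : (a <= n)%N -> (b <= n)%N -> a != b ->
    (inord a : 'I_n.+1) != inord b by move=> ha hb; rewrite -val_eqE /= !inordK.
case: z t => [bz kz] [bt kt]; rewrite /special_pair /= => hsp.
have [hz ht] := (ltn_ord kz, ltn_ord kt).
rewrite !phi_genE -!mulmxE commute_elementary //; apply: inord_neq;
  move: hsp; rewrite /gen_row /gen_col -?val_eqE /=; case: bz; case: bt => /=; lia.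
Qed.

Lemma phi_relator (r : seq (gen n)) : is_relator r -> phi_word r = 1.
Proof.
case=> [[z ->] | [[i [j [/= hj rel]]] | [[i ->] | [[z [t [_ [nsp ->]]]] | [i [j [k [/= hj [/= hk rel]]]]]]]]].
- by rewrite !phi_word_cons phi_word_nil mulr1 phi_gen_involutive.
- have hw : (i + 3 <= n.+1)%N by have := ltn_ord j; lia.
  by case: rel => [|[|[|[|[|]]]]] ->; [
    apply: (phi_word_window_id (ls := wpow 4 [:: (false, 0); (false, 1)]) hw) |
    apply: (phi_word_window_id (ls := wpow 4 [:: (true, 0); (true, 1)]) hw) |
    apply: (phi_word_window_id (ls := wpow 3 [:: (false, 0); (false, 1); (true, 0)]) hw) |
    apply: (phi_word_window_id (ls := wpow 3 [:: (false, 0); (false, 1); (true, 1)]) hw) |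
    apply: (phi_word_window_id (ls := wpow 3 [:: (false, 0); (true, 0); (true, 1)]) hw) |
    apply: (phi_word_window_id (ls := wpow 3 [:: (false, 1); (true, 0); (true, 1)]) hw)];
    rewrite // !map_wpow /= hj addn0 addn1.
- have hw : (i + 2 <= n.+1)%N by have := ltn_ord i; lia.
  apply: (phi_word_window_id (ls := wpow 3 [:: (false, 0); (true, 0)]) hw) => //.
  by rewrite !map_wpow /= addn0.
- rewrite /wpow /= !phi_word_cons phi_word_nil mulr1 [phi_gen t * (_ * _)]mulrA.
  by rewrite -phi_gen_commute // !mulrA phi_gen_involutive mul1r phi_gen_involutive.
- have hw : (i + 4 <= n.+1)%N by have := ltn_ord k; lia.
  by case: rel => ->; [
    apply: (phi_word_window_id (ls := wpow 4 [:: (false, 0); (false, 1); (false, 2)]) hw) |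
    apply: (phi_word_window_id (ls := wpow 4 [:: (true, 0); (true, 1); (true, 2)]) hw)];
    rewrite // !map_wpow /= hk hj addn0 addn1 addn2.
Qed.

End Phi.

Unset Implicit Arguments.
Theorem proposition2 (n : nat) (hn : (0 < n)%N) :
  (forall z : gen n, phi_gen z \in unitmx) /\
  (forall u v : seq (gen n), word_eq u v -> phi_word u = phi_word v).
Proof.
split=> [z | u v].
  by have := phi_gen_involutive z; rewrite -mulmxE => /mulmx1_unit[].
elim=> [// | u' v' _ IH | u' v' w _ IH1 _ IH2 | u' r v' rel].
- by rewrite IH.
- by rewrite IH1 IH2.
- by rewrite !phi_word_cat (phi_relator rel) mul1r.
Qed.
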